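(* There exist finite alphabets $Y,Z$, a constant $c>0$, and a sequence of consistent observation machines $\{N_n\}_n$ from $Y$ to $Z$ with $|N_n|\to\infty$ and $d(N_n)\le 2$ for all $n$, such that every Mealy machine implementing $N_n$ has at least $2^{c|N_n|}$ states.
   Context: An observation machine (OM) from $Y$ to $Z$ is a tuple $(Y,Z,S,D,\Delta,\lambda,r)$ with $S$ finite, $D\subseteq S\times Y$, $\Delta:D\to 2^S\setminus\{\emptyset\}$, $\lambda:D\to Z$, $r\in S$. A run on $y_0\dots y_n$ from $s_0$ is $s_0,y_0,z_0,s_1,\dots,s_{n+1}$ with $(s_i,y_i)\in D$, $s_{i+1}\in\Delta(s_i,y_i)$, $z_i=\lambda(s_i,y_i)$, with output $z_0\dots z_n$; $\Omega_N$ is the set of words having a run from $r$. $N$ is consistent if all runs from $r$ on each $\overline{y}\in\Omega_N$ have the same output $\lambda_N(\overline{y})$. A (completely specified) Mealy machine $T$ from $Y$ to $Z$ implements $N$ if $\lambda_T(\overline{y})=\lambda_N(\overline{y})$ for all $\overline{y}\in\Omega_N$. The size is $|N|=|S|+\sum_{(s,y)\in D}|\Delta(s,y)|$ and the degree is $d(N)=\max_{(s,y)\in D}|\Delta(s,y)|$. *)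

From Stdlib Require Import Reals.
From mathcomp Require Import all_boot.

Set Implicit Arguments.
Unset Strict Implicit.
Unset Printing Implicit Defensive.

(* The domain D is the
   boolean predicate om_dom; Delta and lambda are total functions whose values
   are only meaningful on D (well-formedness: Delta is nonempty on D). *)
Record OM (Y Z : finType) := {
  om_state : finType;
  om_dom : om_state -> Y -> bool;
  om_delta : om_state -> Y -> {set om_state};
  om_out : om_state -> Y -> Z;
  om_root : om_state
}.
Arguments om_state {Y Z} _.
Arguments om_dom {Y Z} _ _ _.
Arguments om_delta {Y Z} _ _ _.
Arguments om_out {Y Z} _ _ _.
Arguments om_root {Y Z} _.

Definition om_wf (Y Z : finType) (N : OM Y Z) : Prop :=
  forall s y, om_dom N s y -> om_delta N s y != set0.

Unset Implicit Arguments.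
Inductive om_run (Y Z : finType) (N : OM Y Z) : om_state N -> seq Y -> seq Z -> Prop :=
| om_run_nil s : om_run Y Z N s [::] [::]
| om_run_cons s y s' w zs :
    om_dom N s y -> s' \in om_delta N s y -> om_run Y Z N s' w zs ->
    om_run Y Z N s (y :: w) (om_out N s y :: zs).
Set Implicit Arguments.
Arguments om_run {Y Z} N _ _ _.

Definition om_accepts (Y Z : finType) (N : OM Y Z) (w : seq Y) : Prop :=
  w <> [::] /\ exists zs, om_run N (om_root N) w zs.

Definition om_consistent (Y Z : finType) (N : OM Y Z) : Prop :=
  forall w zs1 zs2, w <> [::] ->
    om_run N (om_root N) w zs1 -> om_run N (om_root N) w zs2 -> zs1 = zs2.

Definition om_size (Y Z : finType) (N : OM Y Z) : nat :=
  #|om_state N| + \sum_(s : om_state N) \sum_(y : Y | om_dom N s y) #|om_delta N s y|.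

Definition om_degree (Y Z : finType) (N : OM Y Z) : nat :=
  \max_(s : om_state N) \max_(y : Y | om_dom N s y) #|om_delta N s y|.

Record Mealy (Y Z : finType) := {
  me_state : finType;
  me_delta : me_state -> Y -> me_state;
  me_out : me_state -> Y -> Z;
  me_init : me_state
}.
Arguments me_state {Y Z} _.
Arguments me_delta {Y Z} _ _ _.
Arguments me_out {Y Z} _ _ _.
Arguments me_init {Y Z} _.

Unset Implicit Arguments.
Fixpoint me_run (Y Z : finType) (T : Mealy Y Z) (q : me_state T) (w : seq Y) : seq Z :=
  if w is y :: w' then me_out T q y :: me_run Y Z T (me_delta T q y) w' else [::].
Set Implicit Arguments.
Arguments me_run {Y Z} T _ _.

Definition me_lambda (Y Z : finType) (T : Mealy Y Z) (w : seq Y) : seq Z :=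
  me_run T (me_init T) w.

Definition implements (Y Z : finType) (T : Mealy Y Z) (N : OM Y Z) : Prop :=
  forall w zs, w <> [::] -> om_run N (om_root N) w zs -> me_lambda T w = zs.

(* The machine N_n reads bits followed by an end marker (the input None).  At
   every bit it may guess that this bit x is the one to report; it then has to
   see exactly n further bits and the end marker, on which it outputs x
   (all other outputs are false).  Runs guessing the same position have read
   the same bit there, so N_n is consistent; it has O(n) states and degree 2.
   A Mealy machine implementing N_n, after reading n+1 bits t, outputs t_i on
   the suffix false^i None for every i, so the state reached after t
   determines t and there are at least 2^(n+1) states. *)

From HB Require Import structures.
From Stdlib Require Import Reals Lra.
From mathcomp Require Import all_boot zify.

Set Implicit Arguments.
Unset Strict Implicit.
Unset Printing Implicit Defensive.

Section ObservationMachine.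
Variables (Y Z : finType) (N : OM Y Z).

Lemma om_size_ge_card : #|om_state N| <= om_size N.
Proof. exact: leq_addr. Qed.

Lemma om_delta_card_le_degree s y :
  om_dom N s y -> #|om_delta N s y| <= om_degree N.
Proof.
by move=> Dsy; apply: leq_trans (leq_bigmax s); exact: leq_bigmax_cond.
Qed.

Lemma om_degree_le d :
  (forall s y, om_dom N s y -> #|om_delta N s y| <= d) -> om_degree N <= d.
Proof. by move=> le_d; do 2!apply/bigmax_leqP => ? ?; exact: le_d. Qed.

Lemma om_size_le : om_size N <= #|om_state N| * (1 + #|Y| * om_degree N).
Proof.
rewrite /om_size mulnDr muln1 leq_add2l -sum_nat_const leq_sum // => s _.
rewrite -sum_nat_const [X in _ <= X](bigID (om_dom N s)) /=.
apply: leq_trans (leq_addr _ _).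
by apply: leq_sum => y; exact: om_delta_card_le_degree.
Qed.

Section RunInvariant.
Variable P : rel (om_state N).
Hypothesis P_step : forall s1 s2 y t1 t2, P s1 s2 ->
  om_dom N s1 y -> om_dom N s2 y ->
  t1 \in om_delta N s1 y -> t2 \in om_delta N s2 y ->
  om_out N s1 y = om_out N s2 y /\ P t1 t2.

Lemma om_run_inv_out s1 s2 w zs1 zs2 : P s1 s2 ->
  om_run N s1 w zs1 -> om_run N s2 w zs2 -> zs1 = zs2.
Proof.
move=> P12 run1; elim: run1 s2 zs2 P12 => [s|s y t w' zs D1 in1 _ IH] s2 zs2 P12 run2.
  by inversion run2.
inversion run2 as [|? ? t2 ? zs2' D2 in2 run2']; subst.
have [-> Pt] := P_step P12 D1 D2 in1 in2.
by rewrite (IH _ _ Pt run2').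
Qed.

Lemma om_consistent_inv : P (om_root N) (om_root N) -> om_consistent N.
Proof. by move=> Proot w zs1 zs2 _; exact: om_run_inv_out. Qed.

End RunInvariant.
End ObservationMachine.

Section MealyMachine.
Variables (Y Z : finType) (T : Mealy Y Z).

Definition me_reach (q : me_state T) (w : seq Y) : me_state T :=
  foldl (me_delta T) q w.

Lemma me_run_cat q w1 w2 :
  me_run T q (w1 ++ w2) = me_run T q w1 ++ me_run T (me_reach q w1) w2.
Proof. by elim: w1 q => [|y w IH] q //=; rewrite IH. Qed.

Lemma me_card_ge_separated (A : finType) (u : A -> seq Y) :
  (forall a b, (forall v, me_run T (me_reach (me_init T) (u a)) v =
                          me_run T (me_reach (me_init T) (u b)) v) -> a = b) ->
  #|A| <= #|me_state T|.
Proof.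
move=> sep; apply: (@leq_card _ _ (fun a => me_reach (me_init T) (u a))).
by move=> a b eq_ab; apply: sep => v; rewrite eq_ab.
Qed.

End MealyMachine.

Section Guesser.
Variable n : nat.

(* [Guess x i]: the guessed bit is x and i bits have been read since. *)
Inductive gstate := Root | Dead | Guess of bool & 'I_n.+1.

Definition gstate_code (s : gstate) : option (option (bool * 'I_n.+1)) :=
  match s with
  | Root => None
  | Dead => Some None
  | Guess x i => Some (Some (x, i))
  end.

Definition gstate_decode (c : option (option (bool * 'I_n.+1))) : gstate :=
  match c with
  | None => Root
  | Some None => Dead
  | Some (Some (x, i)) => Guess x i
  end.

Lemma gstate_codeK : cancel gstate_code gstate_decode. Proof. by case. Qed.
Lemma gstate_decodeK : cancel gstate_decode gstate_code. Proof. by case=> [[[]|]|]. Qed.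

HB.instance Definition _ := Finite.copy gstate (can_type gstate_codeK).

Lemma card_gstate : #|{: gstate}| = (n.+1).*2.+2.
Proof.
rewrite (bij_eq_card (Bijective gstate_codeK gstate_decodeK)).
by rewrite !card_option card_prod card_bool card_ord mul2n.
Qed.

Definition gdom (s : gstate) (y : option bool) : bool :=
  match s, y with
  | Root, Some _ => true
  | Guess _ i, Some _ => i < n
  | Guess _ i, None => i == n :> nat
  | _, _ => false
  end.

Definition gdelta (s : gstate) (y : option bool) : {set gstate} :=
  match s, y with
  | Root, Some x => [set Root; Guess x ord0]
  | Guess x i, Some _ => [set Guess x (inord i.+1)]
  | Guess _ _, None => [set Dead]
  | _, _ => set0
  end.

Definition gout (s : gstate) (y : option bool) : bool :=
  if (s, y) is (Guess x _, None) then x else false.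

Definition guesser : OM (option bool : finType) (bool : finType) :=
  {| om_state := gstate; om_dom := gdom; om_delta := gdelta;
     om_out := gout; om_root := Root |}.

Lemma guesser_wf : om_wf guesser.
Proof.
move=> [||x i] [y|] //= _; apply/set0Pn.
- by exists Root; rewrite !inE eqxx.
- by exists (Guess x (inord i.+1)); rewrite inE.
- by exists Dead; rewrite inE.
Qed.

Lemma guesser_degree : om_degree guesser <= 2.
Proof.
by apply: om_degree_le => -[||x i] [y|] //= _; rewrite ?cards1 ?cards2.
Qed.

Lemma guesser_size : om_size guesser <= 28 * n.+1.
Proof.
apply: (leq_trans (om_size_le guesser)).
rewrite card_gstate card_option card_bool.
have := guesser_degree; rewrite /=; nia.
Qed.

Lemma guesser_size_ge : n <= om_size guesser.
Proof.
apply: leq_trans (om_size_ge_card guesser); rewrite /= card_gstate; lia.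
Qed.

Definition phase (s : gstate) : option nat :=
  if s is Guess _ i then Some (val i) else None.

(* Two runs on the same word whose phases agree guessed the same position,
   hence the same bit. *)
Definition same_guess (s1 s2 : gstate) : bool :=
  (phase s1 == phase s2) ==> (s1 == s2).

Lemma same_guess_step s1 s2 y t1 t2 : same_guess s1 s2 ->
  gdom s1 y -> gdom s2 y -> t1 \in gdelta s1 y -> t2 \in gdelta s2 y ->
  gout s1 y = gout s2 y /\ same_guess t1 t2.
Proof.
rewrite /same_guess.
case: s1 s2 y => [||x1 i1] [||x2 i2] [y|] //= eq_12; rewrite ?inE.
- by move=> _ _ /orP[]/eqP-> /orP[]/eqP->; rewrite ?eqxx.
- by move=> _ lt2 /orP[]/eqP-> /eqP->; rewrite /= ?inordK.
- by move=> lt1 _ /eqP-> /orP[]/eqP->; rewrite /= ?inordK.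
- move=> lt1 lt2 /eqP-> /eqP->; split=> //=; rewrite !inordK //.
  apply/implyP=> /eqP[/val_inj eq_i]; move: eq_12; rewrite eq_i eqxx /=.
  by move=> /eqP[->]; rewrite eqxx.
- move=> /eqP eq1 /eqP eq2 /eqP-> /eqP->; split=> //.
  have eq_i : i1 = i2 by apply: val_inj; rewrite /= eq1 eq2.
  by move: eq_12; rewrite eq_i eqxx /= => /eqP[].
Qed.

Lemma guesser_consistent : om_consistent guesser.
Proof.
apply: (@om_consistent_inv _ _ guesser same_guess); first exact: same_guess_step.
by rewrite /same_guess eqxx.
Qed.

Lemma guesser_run_track x p j : j + size p = n ->
  om_run guesser (Guess x (inord j)) (map Some p ++ [:: None])
         (rcons (nseq (size p) false) x).
Proof.
elim: p j => [|y p IH] j /= def_n.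
  apply: (@om_run_cons _ _ guesser _ _ Dead); last exact: om_run_nil.
    by rewrite /= inordK -def_n ?addn0.
  by rewrite inE.
have lt_jn : j < n by rewrite -def_n addnS ltnS leq_addr.
apply: (@om_run_cons _ _ guesser _ _ (Guess x (inord j.+1))).
- by rewrite /= (inordK (ltnW lt_jn)).
- by rewrite /= (inordK (ltnW lt_jn)) inE.
- by apply: IH; rewrite addSn -addnS.
Qed.

Lemma guesser_run_root q w zs : om_run guesser Root w zs ->
  om_run guesser Root (map Some q ++ w) (nseq (size q) false ++ zs).
Proof.
elim: q => //= y q IH run_w.
apply: (@om_run_cons _ _ guesser _ _ Root) => //; last exact: IH.
by rewrite !inE eqxx.
Qed.

Lemma guesser_run_bit t i : size t = n.+1 -> i < n.+1 -> exists zs,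
  om_run guesser Root (map Some t ++ nseq i (Some false) ++ [:: None])
         (rcons zs (nth false t i)).
Proof.
move=> size_t lt_i; set x := nth false t i.
set p := drop i.+1 t ++ nseq i false.
have size_p : 0 + size p = n by rewrite /p size_cat size_drop size_nseq size_t; lia.
have -> : map Some t ++ nseq i (Some false) ++ [:: None] =
          map Some (take i t) ++ Some x :: map Some p ++ [:: None].
  rewrite -{1}(cat_take_drop i t) (drop_nth false) ?size_t //.
  by rewrite /p !map_cat map_nseq -!catA.
exists (nseq (size (take i t)) false ++ false :: nseq (size p) false).
rewrite rcons_cat rcons_cons; apply: guesser_run_root.
apply: (@om_run_cons _ _ guesser _ _ (Guess x (inord 0))) => //.
  by rewrite (inord_val ord0) !inE eqxx orbT.
exact: guesser_run_track.
Qed.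

Lemma guesser_last_out (T : Mealy (option bool : finType) (bool : finType))
    (t : (n.+1).-tuple bool) (i : 'I_n.+1) :
  implements T guesser ->
  last false (me_run T (me_reach (me_init T) (map Some t))
                       (nseq i (Some false) ++ [:: None])) = tnth t i.
Proof.
move=> impl_T; have [zs run_t] := guesser_run_bit (size_tuple t) (ltn_ord i).
have /impl_T/(_ run_t) : map Some t ++ nseq i (Some false) ++ [:: None] <> [::].
  by rewrite catA => /(congr1 size); rewrite size_cat addn1.
rewrite /me_lambda !me_run_cat => /(congr1 (last false)).
by rewrite !last_cat last_rcons (tnth_nth false).
Qed.

Lemma implements_guesser_card (T : Mealy (option bool : finType) (bool : finType)) :
  implements T guesser -> 2 ^ n.+1 <= #|me_state T|.
Proof.
move=> impl_T; rewrite -[2]card_bool -card_tuple.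
apply: (me_card_ge_separated (u := fun t : (n.+1).-tuple bool => map Some t)).
move=> t t' same_res.
apply: eq_from_tnth => i; rewrite -(guesser_last_out t i impl_T).
by rewrite -(guesser_last_out t' i impl_T) same_res.
Qed.
End Guesser.

Lemma INR_expn k m : INR (k ^ m) = pow (INR k) m.
Proof. by elim: m => [|m IH] //; rewrite expnS mult_INR IH. Qed.

Lemma Rpower2_le_INR k a b m : 0 < k -> a <= k * b -> 2 ^ b <= m ->
  Rle (Rpower 2 (/ INR k * INR a)) (INR m).
Proof.
move=> /ltP/lt_0_INR k_gt0 /leP/le_INR le_ab /leP/le_INR le_bm.
rewrite mult_INR in le_ab; rewrite INR_expn /= in le_bm.
apply: (Rle_trans _ (Rpower 2 (INR b))).
  apply: Rle_Rpower; first lra.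
  apply/(Rmult_le_reg_l (INR k)) => //.
  by rewrite -Rmult_assoc Rinv_r ?Rmult_1_l //; lra.
by rewrite Rpower_pow //; lra.
Qed.

Theorem lemma2 :
  exists (Y Z : finType) (c : R), Rlt 0 c /\
  exists N : nat -> OM Y Z,
    (forall n, om_wf (N n) /\ om_consistent (N n)) /\
    (forall M : nat, exists n0 : nat, forall n, n0 <= n -> M <= om_size (N n)) /\
    (forall n, om_degree (N n) <= 2) /\
    (forall n (T : Mealy Y Z), implements T (N n) ->
       Rle (Rpower 2 (Rmult c (INR (om_size (N n))))) (INR #|me_state T|)).
Proof.
exists (option bool : finType), (bool : finType), (Rinv (INR 28)).
split; first by apply/Rinv_0_lt_compat/lt_0_INR/ltP.
exists guesser; split.
  by move=> n; split; [exact: guesser_wf | exact: guesser_consistent].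
split; first by move=> M; exists M => n le_Mn; exact: leq_trans le_Mn (guesser_size_ge n).
split; first exact: guesser_degree.
move=> n T impl_T.
exact: Rpower2_le_INR (guesser_size n) (implements_guesser_card impl_T).
Qed.
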